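(* In each iteration of Algorithm 1 (with $i^*,i_L$ the quantities of that iteration), for every $i$ with $i^*<i<b(i^* )$ we have $\mathrm{avg}(i^*,i)\le\mathrm{avg}(i,b(i^* ))$, and for every $i$ with $i_L<i<i^*$ we have $\mathrm{avg}(i,b(i^* ))<\mathrm{avg}(i,i^* )$.
   Context: Problem (P): given an integer $n\ge1$, reals $0<q_1\le\cdots\le q_n$, $z_1,\dots,z_n>0$ and $K>0$, maximize $\sum_{i=1}^n x_i$ subject to $0\le x_i\le q_i$, $0\le x_1\le\cdots\le x_n$, $\sum_{i=1}^n z_ix_i\le K$. For $1\le i<j\le n+1$ let $\mathrm{sum}(i,j)=z_i+\cdots+z_{j-1}$ and $\mathrm{avg}(i,j)=\mathrm{sum}(i,j)/(j-i)$. Algorithm 1 (run on an instance of (P)): Initialize $S=\{0,n+1\}$, $y_i=\mathrm{avg}(i,n+1)$ and $x_i=0$ for $i=1,\dots,n$, and $\hat B=K$. While $\hat B>0$ and $S\ne\{0,1,\dots,n+1\}$, perform an iteration: let $i^*$ be the index $i\in\{1,\dots,n\}\setminus S$ minimizing $y_i$, ties broken in favour of the smallest index; let $i_L=\max\{j\in S:j<i^*\}$ and $i_R=\min\{j\in S:j>i^*\}$; set $d=\min\{\hat B/((i_R-i^* )y_{i^*}),\ q_{i^*}-x_{i^*}\}$; set $\hat B\leftarrow\hat B-d(i_R-i^* )y_{i^*}$; set $x_i\leftarrow x_i+d$ for all $i^*\le i<i_R$; set $y_i\leftarrow\mathrm{avg}(i,i^* )$ for all $i_L<i<i^*$; add $i^*$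 to $S$. Finally output $x_1,\dots,x_n$. Blocker: for $1\le i\le n$, $b(i)$ is the value of $i^*$ in the last iteration in which $y_i$ is updated (i.e. the last iteration with $i_L<i<i^*$); if $y_i$ is never updated, $b(i)=n+1$. *)

From mathcomp Require Import all_boot all_order all_algebra.
Set Implicit Arguments. Unset Strict Implicit. Unset Printing Implicit Defensive.
Import Order.TTheory GRing.Theory Num.Theory.
Local Open Scope ring_scope.

Section Algo.
Variable R : realFieldType.
Variable n : nat.
Variables (q z : nat -> R) (K : R).

Definition sumz (i j : nat) : R := \sum_(i <= k < j) z k.
Definition avg (i j : nat) : R := sumz i j / (j - i)%:R.

(* state of Algorithm 1: the set S (as a boolean predicate on indices),
   the vectors y and x, and the remaining budget Bhat *)
Record state := State { stS : nat -> bool; sty : nat -> R; stx : nat -> R; stB : R }.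

Definition init : state :=
  State (fun j => (j == 0)%N || (j == n.+1)) (fun i => avg i n.+1) (fun _ => 0) K.

Definition cands (s : state) : seq nat := [seq i <- iota 1 n | ~~ stS s i].

(* loop condition: Bhat > 0 and S <> {0,...,n+1} *)
Definition loop_cond (s : state) : bool := (0 < stB s) && (cands s != [::]).

(* i^* : the first (= smallest) index of {1..n}\S minimizing y *)
Definition istar (s : state) : nat :=
  let C := cands s in
  nth 0%N C (find (fun i => all (fun j => sty s i <= sty s j) C) C).

Definition ileft (s : state) : nat := \max_(j < istar s | stS s j) j.

(* i_R = min { j in S : j > i^* } *)
Definition iright (s : state) : nat :=
  let i0 := istar s in
  (i0.+1 + find (stS s) (iota i0.+1 (n.+1 - i0)))%N.

Definition iteration (s : state) : state :=
  let ist := istar s in let iL := ileft s in let iR := iright s in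
  let w := (iR - ist)%:R * sty s ist in
  let d := Num.min (stB s / w) (q ist - stx s ist) in
  State (fun j => (j == ist) || stS s j)
        (fun i => if (iL < i < ist)%N then avg i ist else sty s i)
        (fun i => if (ist <= i < iR)%N then stx s i + d else stx s i)
        (stB s - d * w).

Definition step (s : state) : state := if loop_cond s then iteration s else s.

(* state at the start of iteration number k (k = 0, 1, ...) *)
Definition run (k : nat) : state := iter k step init.

(* iteration number k is actually performed by the algorithm
   (once the loop condition fails, the state no longer changes) *)
Definition performed (k : nat) : bool := loop_cond (run k).

(* the iterations in which y_i ist updated, i.e. i_L < i < i^* *)
Definition updates (i : nat) : seq nat :=
  [seq k <- iota 0 n.+1 | performed k && (ileft (run k) < i < istar (run k))%N].

Definition blocker (i : nat) : nat :=
  if updates i is [::] then n.+1 else istar (run (last 0%N (updates i))).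

End Algo.

(* Induction on the iterations gives the invariant: every index i outside S
   has y_i = avg(i, b), where b is the least element of S above i and is also
   the blocker of i as determined so far.  Once i* enters S its blocker b can
   no longer change, so b is the successor in S of i*, and then also of every
   i with i_L < i < b; for these i, y_i = avg(i, b).  The two inequalities are
   then the minimality of y at i* (strict for i < i*, by the tie-breaking
   rule) rewritten with the mediant property: avg(a, c) lies between
   avg(a, m) and avg(m, c). *)

From Pilot Require Import Defs.
From mathcomp Require Import all_boot all_order all_algebra.
From mathcomp Require Import ring zify.
Import Order.TTheory GRing.Theory Num.Theory.
Local Open Scope ring_scope.

Section Mediant.
Variables (R : numFieldType) (p r S1 S2 : R).
Hypotheses (p_gt0 : 0 < p) (r_gt0 : 0 < r).

Lemma mediantBr : (S1 + S2) / (p + r) - S2 / r = p / (p + r) * (S1 / p - S2 / r).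
Proof. by field; rewrite !gt_eqF ?addr_gt0. Qed.

Lemma mediantBl : S1 / p - (S1 + S2) / (p + r) = r / (p + r) * (S1 / p - S2 / r).
Proof. by field; rewrite !gt_eqF ?addr_gt0. Qed.

Lemma mediant_le_r : ((S1 + S2) / (p + r) <= S2 / r) = (S1 / p <= S2 / r).
Proof. by rewrite -subr_le0 mediantBr pmulr_rle0 ?subr_le0 // divr_gt0 ?addr_gt0. Qed.

Lemma mediant_lt_l : ((S1 + S2) / (p + r) < S1 / p) = (S2 / r < S1 / p).
Proof. by rewrite -subr_gt0 mediantBl pmulr_rgt0 ?subr_gt0 // divr_gt0 ?addr_gt0. Qed.

End Mediant.

Section Averages.
Variables (R : realFieldType) (z : nat -> R) (a m c : nat).
Hypothesis amc : (a < m < c)%N.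

Lemma avg_mediant :
  avg z a c = (sumz z a m + sumz z m c) / ((m - a)%:R + (c - m)%:R).
Proof.
case/andP: amc => am mc.
rewrite /avg /sumz -(big_cat_nat (ltnW am) (ltnW mc)) -natrD.
by congr (_ / _%:R); lia.
Qed.

Let dist_gt0 i j : (i < j)%N -> (0 : R) < (j - i)%:R.
Proof. by move=> ij; rewrite ltr0n subn_gt0. Qed.

Lemma avg_split_le : (avg z a c <= avg z m c) = (avg z a m <= avg z m c).
Proof. by case/andP: amc => am mc; rewrite avg_mediant mediant_le_r ?dist_gt0. Qed.

Lemma avg_split_lt : (avg z a c < avg z a m) = (avg z m c < avg z a m).
Proof. by case/andP: amc => am mc; rewrite avg_mediant mediant_lt_l ?dist_gt0. Qed.

End Averages.

Section FirstArgmin.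
Context {d : Order.disp_t} {T : orderType d}.

Definition first_argmin (y : nat -> T) (C : seq nat) : nat :=
  nth 0%N C (find (fun i => all (fun j => (y i <= y j)%O) C) C).

Context {y : nat -> T} {C : seq nat}.
Let P i := all (fun j => (y i <= y j)%O) C.

Lemma has_argmin : C != [::] -> has P C.
Proof.
rewrite /P; elim: C => [//|a s IH] _.
have [->|/IH /hasP[x xs /allP x_min]] := eqVneq s [::]; first by rewrite /= lexx.
apply/hasP; case: (leP (y a) (y x)) => [ax|xa].
  exists a; rewrite ?mem_head //= lexx; apply/allP => j /x_min; exact: le_trans.
by exists x; rewrite ?inE ?xs ?orbT //= (ltW xa); apply/allP.
Qed.

Hypothesis C_neq0 : C != [::].

Lemma first_argmin_mem : first_argmin y C \in C.
Proof. by rewrite /first_argmin mem_nth // -has_find has_argmin. Qed.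

Lemma first_argmin_le {j} : j \in C -> (y (first_argmin y C) <= y j)%O.
Proof. exact: (allP (nth_find 0%N (has_argmin C_neq0))). Qed.

Lemma first_argmin_lt {j} : sorted leq C -> j \in C -> (j < first_argmin y C)%N ->
  (y (first_argmin y C) < y j)%O.
Proof.
have -> : first_argmin y C = nth 0%N C (find P C) by [].
move=> C_sorted jC j_lt.
have find_lt : (find P C < size C)%N by rewrite -has_find has_argmin.
have index_lt : (index j C < find P C)%N.
  rewrite ltnNge; apply/negP => /(sorted_leq_nth leq_trans leqnn 0%N C_sorted).
  by rewrite !inE index_mem jC nth_index // => /(_ find_lt isT) /(leq_trans j_lt); rewrite ltnn.
have /negbT/allPn[k kC] := before_find 0%N index_lt.
rewrite nth_index // -ltNge; exact/le_lt_trans/first_argmin_le.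
Qed.

End FirstArgmin.

Definition is_next (P : pred nat) (i b : nat) : Prop :=
  [/\ (i < b)%N, P b & forall j, (i < j < b)%N -> ~~ P j].

Lemma is_next_le {P i b c} : is_next P i b -> P c -> (i < c)%N -> (b <= c)%N.
Proof. by case=> _ _ gap Pc ic; rewrite leqNgt; apply: contraL Pc => cb; apply: gap; rewrite ic. Qed.

Lemma is_next_uniq {P i b b'} : is_next P i b -> is_next P i b' -> b = b'.
Proof.
move=> nb nb'; case: (nb) (nb') => ib Pb _ [ib' Pb' _].
by apply/eqP; rewrite eqn_leq (is_next_le nb Pb') // (is_next_le nb' Pb).
Qed.

Lemma is_next_sub {P a i b} : is_next P a b -> (a <= i < b)%N -> is_next P i b.
Proof.
case=> _ Pb gap /andP[ai ib]; split=> // j /andP[ij jb].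
by apply: gap; rewrite jb (leq_ltn_trans ai ij).
Qed.

Lemma is_next_extend {P a i b} : (a <= i)%N -> (forall j, (a < j <= i)%N -> ~~ P j) ->
  is_next P i b -> is_next P a b.
Proof.
move=> ai gap_ai [ib Pb gap_ib]; split=> [|//|j /andP[aj jb]].
  exact: leq_ltn_trans ib.
by case: (leqP j i) => [ji|ij]; [apply: gap_ai; rewrite aj | apply: gap_ib; rewrite ij].
Qed.

Lemma bigmax_ord_cond_spec (m : nat) (P : pred nat) : P 0%N -> (0 < m)%N ->
  [/\ P (\max_(j < m | P j) j), (\max_(j < m | P j) j < m)%N &
      forall j, P j -> (j < m)%N -> (j <= \max_(j < m | P j) j)%N].
Proof.
move=> P0 m_gt0.
have [|i0 Pi0 max_eq] := @eq_bigmax_cond _ [pred j : 'I_m | P j] val.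
  by apply/card_gt0P; exists (Ordinal m_gt0).
split; [by rewrite max_eq | by rewrite max_eq ltn_ord | move=> j Pj jm].
exact: (@leq_bigmax_cond _ [pred j : 'I_m | P j] val (Ordinal jm) Pj).
Qed.

Section Algorithm.
Variables (R : realFieldType) (n : nat) (q z : nat -> R) (K : R).

Notation run := (run n q z K).
Notation performed := (performed n q z K).
Notation S_ m := (stS (run m)).
Notation ist m := (istar n (run m)).
Notation iL m := (ileft n (run m)).

Lemma istarE (s : state R) : istar n s = first_argmin (sty s) (cands n s).
Proof. by []. Qed.

Lemma mem_cands (s : state R) j : (j \in cands n s) = [&& (0 < j)%N, (j <= n)%N & ~~ stS s j].
Proof. by rewrite mem_filter mem_iota add1n ltnS andbC -andbA. Qed.

Lemma sorted_cands (s : state R) : sorted leq (cands n s).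
Proof. exact/sorted_filter/iota_sorted/leq_trans. Qed.

Lemma run_succ m : run m.+1 = step n q z (run m).
Proof. by []. Qed.

Lemma run_stop {m} : ~~ performed m -> run m.+1 = run m.
Proof. by rewrite run_succ /step /Defs.performed => /negbTE ->. Qed.

Lemma performed_pred {m} : performed m.+1 -> performed m.
Proof. by apply: contraLR => stop; rewrite /Defs.performed run_stop. Qed.

Lemma S_succ {m} j : performed m -> S_ m.+1 j = (j == ist m) || S_ m j.
Proof. by rewrite run_succ /step /Defs.performed => ->. Qed.

Lemma sty_succ {m} i : performed m ->
  sty (run m.+1) i = if (iL m < i < ist m)%N then avg z i (ist m) else sty (run m) i.
Proof. by rewrite run_succ /step /Defs.performed => ->. Qed.

Lemma S_mono m d j : S_ m j -> S_ (m + d) j.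
Proof.
move=> Smj; elim: d => [|d IH]; first by rewrite addn0.
rewrite addnS; case: (boolP (performed (m + d))) => [pmd | /run_stop ->] //.
by rewrite S_succ // IH orbT.
Qed.

Lemma S_ends m : S_ m 0 /\ S_ m n.+1.
Proof. by split; apply: (S_mono 0); rewrite /Defs.run /= ?eqxx ?orbT. Qed.

Lemma istar_cand {m} : performed m -> ist m \in cands n (run m).
Proof. by case/andP=> _; apply: first_argmin_mem. Qed.

Lemma ileft_spec {m} : performed m ->
  [/\ S_ m (iL m), (iL m < ist m)%N & forall j, S_ m j -> (j < ist m)%N -> (j <= iL m)%N].
Proof.
move/istar_cand; rewrite mem_cands => /and3P[ist_gt0 _ _].
exact: bigmax_ord_cond_spec (S_ends m).1 ist_gt0.
Qed.

Lemma ileft_gap {m} j : performed m -> (iL m < j < ist m)%N -> ~~ S_ m j.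
Proof.
case/ileft_spec=> _ _ iL_max /andP[iL_j j_ist].
by apply: contraL iL_j => /iL_max /(_ j_ist); rewrite -leqNgt.
Qed.

Lemma count_S_succ {m} : performed m ->
  count (S_ m.+1) (iota 1 n) = (count (S_ m) (iota 1 n)).+1.
Proof.
move=> pm; have := istar_cand pm; rewrite mem_cands => /and3P[ist_gt0 ist_le ist_notS].
have disj : count (predI (pred1 (ist m)) (S_ m)) (iota 1 n) = 0%N.
  apply/eqP; rewrite eqn0Ngt -has_count; apply/hasPn => j _ /=.
  by case: eqP => // ->.
rewrite (@eq_count _ _ (predU (pred1 (ist m)) (S_ m))) => [|j]; last exact: S_succ.
have := count_predUI (pred1 (ist m)) (S_ m) (iota 1 n); rewrite disj addn0 => ->.
by rewrite count_uniq_mem ?iota_uniq // mem_iota ist_gt0 add1n ltnS ist_le.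
Qed.

Lemma performed_le {m} : performed m -> (m <= n)%N.
Proof.
move=> pm; rewrite -[n](size_iota 1); apply: leq_trans (count_size (S_ m) _).
elim: m pm => [//|m IH] pm.
by rewrite count_S_succ ?ltnS ?IH ?(performed_pred pm).
Qed.

(* [blocker n q z K] is convertible to [blocker_upto n.+1]. *)
Definition blocker_upto (m i : nat) : nat :=
  let l := [seq k <- iota 0 m | performed k && (iL k < i < ist k)%N] in
  if l is [::] then n.+1 else ist (last 0%N l).

Lemma blocker_upto_succ m i : blocker_upto m.+1 i =
  if performed m && (iL m < i < ist m)%N then ist m else blocker_upto m i.
Proof.
rewrite /blocker_upto -[m.+1]addn1 iotaD filter_cat /= add0n.
case: ifP => _; last by rewrite cats0.
by case: filter => [|k l] //=; rewrite last_cat.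
Qed.

Lemma blocker_upto_spec {m i} : (i <= n)%N -> ~~ S_ m i ->
  is_next (S_ m) i (blocker_upto m i) /\ sty (run m) i = avg z i (blocker_upto m i).
Proof.
move=> i_le; elim: m => [|m IH].
  move=> _; split=> //; split=> [|/=|j /andP[ij jn] /=]; rewrite ?eqxx ?orbT //.
  by rewrite negb_or !neq_ltn jn (leq_ltn_trans (leq0n i) ij) orbT.
rewrite blocker_upto_succ; case: (boolP (performed m)) => [pm | /run_stop ->] //=.
have [iL_S iL_lt _] := ileft_spec pm.
rewrite S_succ // negb_or sty_succ // => /andP[i_ne i_notS].
case: ifP => [/andP[iL_i i_ist] | not_updated].
  split=> //; split=> [//||j /andP[ij j_ist]]; rewrite S_succ ?eqxx //.
  by rewrite ltn_eqF // ileft_gap // j_ist (ltn_trans iL_i ij).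
have [next_b y_i] := IH i_notS; have [i_b S_b gap_b] := next_b.
split=> //; split=> [//||j /andP[ij jb]]; rewrite S_succ ?S_b ?orbT //.
rewrite negb_or gap_b ?ij // andbT; apply: contraTneq jb => j_ist.
rewrite j_ist in ij *; rewrite -leqNgt.
have i_iL : (i < iL m)%N.
  rewrite ltn_neqAle; apply/andP; split; first by apply: contraNneq i_notS => ->.
  by move: not_updated; rewrite ij andbT => /negbT; rewrite -leqNgt.
exact: leq_trans (is_next_le next_b iL_S i_iL) (ltnW iL_lt).
Qed.

Lemma sty_next {m i b} : (i <= n)%N -> ~~ S_ m i -> is_next (S_ m) i b ->
  sty (run m) i = avg z i b.
Proof.
move=> i_le i_notS next_b; have [next_b' ->] := blocker_upto_spec i_le i_notS.
by rewrite (is_next_uniq next_b' next_b).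
Qed.

Lemma blocker_upto_settled m d i : S_ m i -> blocker_upto (m + d) i = blocker_upto m i.
Proof.
move=> Smi; elim: d => [|d IH]; first by rewrite addn0.
rewrite addnS blocker_upto_succ IH; case: (boolP (performed (m + d))) => //= pmd.
have [_ _ iL_max] := ileft_spec pmd.
case: ifP => // /andP[iL_i i_ist].
by have := iL_max i (S_mono m d i Smi) i_ist; rewrite leqNgt iL_i.
Qed.

Lemma blocker_istar k : performed k ->
  blocker n q z K (ist k) = blocker_upto k (ist k).
Proof.
move=> pk; have S_ist : S_ k.+1 (ist k) by rewrite S_succ ?eqxx.
rewrite [LHS](_ : _ = blocker_upto (k.+1 + (n - k)) (ist k)); last first.
  by rewrite addSn subnKC ?performed_le.
by rewrite blocker_upto_settled // blocker_upto_succ pk ltnn andbF.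
Qed.

Lemma cand_before_next {m a i b} : (a <= n)%N -> is_next (S_ m) a b -> (a < i < b)%N ->
  i \in cands n (run m) /\ sty (run m) i = avg z i b.
Proof.
move=> a_le next_b /andP[a_i i_b].
have next_i : is_next (S_ m) i b by apply: (is_next_sub next_b); rewrite (ltnW a_i).
have i_notS : ~~ S_ m i by case: next_b => _ _; apply; rewrite a_i.
have b_le : (b <= n.+1)%N by apply: is_next_le next_b (S_ends m).2 _.
have i_le : (i <= n)%N by rewrite -ltnS (leq_trans i_b).
by rewrite mem_cands (leq_ltn_trans _ a_i) // i_le i_notS (sty_next i_le i_notS next_i).
Qed.

Lemma istar_blocker_spec {k} : performed k ->
  let b := blocker n q z K (ist k) in
  [/\ (ist k < b)%N, is_next (S_ k) (iL k) b & sty (run k) (ist k) = avg z (ist k) b].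
Proof.
move=> pk /=; rewrite blocker_istar //.
have := istar_cand pk; rewrite mem_cands => /and3P[_ ist_le ist_notS].
have [[ist_b S_b gap_b] ->] := blocker_upto_spec ist_le ist_notS.
have [_ iL_lt _] := ileft_spec pk.
split=> //; apply: (is_next_extend (ltnW iL_lt)) => [j /andP[iL_j]|//].
by rewrite leq_eqVlt => /orP[/eqP -> // | j_ist]; apply: ileft_gap; rewrite ?iL_j.
Qed.

Lemma sty_between_ileft_blocker {k i} : performed k ->
  let b := blocker n q z K (ist k) in
  (iL k < i)%N -> (i < b)%N -> i \in cands n (run k) /\ sty (run k) i = avg z i b.
Proof.
move=> pk /= iL_i i_b; have [_ next_iL _] := istar_blocker_spec pk.
have [_ iL_lt _] := ileft_spec pk.
have := istar_cand pk; rewrite mem_cands => /and3P[_ ist_le _].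
by apply: cand_before_next next_iL _; rewrite ?iL_i // ltnW // (leq_trans iL_lt).
Qed.

Lemma avg_istar_le_blocker {k i} : performed k ->
  let b := blocker n q z K (ist k) in
  (ist k < i < b)%N -> avg z (ist k) i <= avg z i b.
Proof.
move=> pk /= /[dup] ist_i_b /andP[ist_i i_b].
have [_ _ y_ist] := istar_blocker_spec pk; have [_ iL_lt _] := ileft_spec pk.
have [i_cand y_i] := sty_between_ileft_blocker pk (ltn_trans iL_lt ist_i) i_b.
rewrite -avg_split_le // -y_ist -y_i istarE.
by apply: first_argmin_le i_cand; case/andP: pk.
Qed.

Lemma avg_blocker_lt_ileft {k i} : performed k ->
  let b := blocker n q z K (ist k) in
  (iL k < i < ist k)%N -> avg z i b < avg z i (ist k).
Proof.
move=> pk /= /andP[iL_i i_ist]; have [ist_b _ y_ist] := istar_blocker_spec pk.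
have [i_cand y_i] := sty_between_ileft_blocker pk iL_i (ltn_trans i_ist ist_b).
have cands_ne : cands n (run k) != [::] by case/andP: pk.
have := first_argmin_lt cands_ne (sorted_cands _) i_cand i_ist.
by rewrite -istarE y_ist y_i ltNge avg_split_le ?i_ist // -ltNge avg_split_lt ?i_ist.
Qed.

End Algorithm.

Theorem lemma9 (R : realFieldType) (n : nat) (q z : nat -> R) (K : R) :
  (1 <= n)%N ->
  (forall i, (1 <= i <= n)%N -> 0 < q i) ->
  (forall i, (1 <= i < n)%N -> q i <= q i.+1) ->
  (forall i, (1 <= i <= n)%N -> 0 < z i) ->
  0 < K ->
  forall k : nat, performed n q z K k ->
    let s := run n q z K k in
    let ist := istar n s in
    let iL := ileft n s in
    let b := blocker n q z K ist in
    (forall i, (ist < i < b)%N -> avg z ist i <= avg z i b) /\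
    (forall i, (iL < i < ist)%N -> avg z i b < avg z i ist).
Proof.
move=> _ _ _ _ _ k pk /=.
by split=> i; [apply: avg_istar_le_blocker | apply: avg_blocker_lt_ileft].
Qed.
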